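(* Let $A$ be a Banach algebra with a bounded left approximate identity, let $X$ be a Banach space, and let $\varphi\colon A\to\mathcal{B}(X)$ be a representation. If for every $x\in X$ the orbit map $A\to X$, $a\mapsto\varphi(a)x$, is weakly compact, then the essential space of $\varphi$ is complemented in $X$.
   Context: A representation is a bounded linear multiplicative map. The essential space of $\varphi$ is the closed linear span of $\{\varphi(a)x: a\in A, x\in X\}$. A closed subspace is complemented if it is the image of some bounded idempotent operator on $X$. *)

From HB Require Import structures.
From mathcomp Require Import all_boot all_order all_algebra complex.
From mathcomp Require Import all_classical all_reals all_analysis.
Import Order.TTheory GRing.Theory Num.Theory numFieldNormedType.Exports.
Set Implicit Arguments.
Unset Strict Implicit.
Unset Printing Implicit Defensive.
Local Open Scope classical_set_scope.
Local Open Scope ring_scope.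

Section Defs.
Variable R : realType.
Local Notation C := (R[i]).

Definition banach_algebra_mul (A : completeNormedModType C) (mul : A -> A -> A) : Prop :=
  [/\ (forall a b c, mul (mul a b) c = mul a (mul b c)),
      (forall k a b c, mul (k *: a + b) c = k *: mul a c + mul b c),
      (forall k a b c, mul a (k *: b + c) = k *: mul a b + mul a c)
    & (forall a b, `|mul a b| <= `|a| * `|b|)].

Definition has_blai (A : completeNormedModType C) (mul : A -> A -> A) : Prop :=
  exists (I : Type) (le : I -> I -> Prop) (e : I -> A) (M : C),
    inhabited I /\
    (forall i, le i i) /\
    (forall i j k, le i j -> le j k -> le i k) /\
    (forall i j, exists k, le i k /\ le j k) /\
    (forall i, `|e i| <= M) /\
    (forall a (eps : C), 0 < eps ->
           exists i0, forall i, le i0 i -> `|mul (e i) a - a| < eps).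

Definition representation (A : completeNormedModType C) (mul : A -> A -> A)
  (X : completeNormedModType C) (phi : A -> X -> X) : Prop :=
  [/\ (forall a k x y, phi a (k *: x + y) = k *: phi a x + phi a y),
      (forall k a b x, phi (k *: a + b) x = k *: phi a x + phi b x),
      (forall a b x, phi (mul a b) x = phi a (phi b x))
    & (exists M : C, forall a x, `|phi a x| <= M * `|a| * `|x|)].

Definition is_cont_lin_functional (W : normedModType C) (f : W -> C^o) : Prop :=
  (forall k x y, f (k *: x + y) = k *: f x + f y) /\ continuous f.

Definition dual (W : normedModType C) := {f : W -> C^o | is_cont_lin_functional f}.

Definition weak_eval (W : normedModType C) (w : W) : {ptws dual W -> C^o} :=
  fun f => proj1_sig f w.

(* W equipped with its weak topology sigma(W, W^* ) *)
Definition weakT (W : normedModType C) := initial_topology (@weak_eval W).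

Definition rel_weakly_compact (W : normedModType C) (S : set W) : Prop :=
  @compact (weakT W) (@closure (weakT W) S).

Definition weakly_compact_op (V W : normedModType C) (T : V -> W) : Prop :=
  rel_weakly_compact (T @` [set v : V | `|v| <= 1]).

Definition lin_span (W : normedModType C) (S : set W) : set W :=
  [set w | exists (n : nat) (c : 'I_n -> C) (v : 'I_n -> W),
             (forall i, S (v i)) /\ w = \sum_(i < n) c i *: v i].

Definition essential_space (A : completeNormedModType C)
  (X : completeNormedModType C) (phi : A -> X -> X) : set X :=
  closure (lin_span [set phi a x | a in [set: A] & x in [set: X]]).

Definition complemented (W : normedModType C) (E : set W) : Prop :=
  exists P : W -> W,
    [/\ (forall k x y, P (k *: x + y) = k *: P x + P y),
        (exists M : C, forall x, `|P x| <= M * `|x|),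
        (forall x, P (P x) = P x)
      & range P = E].

End Defs.

(* Let (e_i) be the bounded left approximate identity, say |e_i| <= K, and U
   an ultrafilter finer than the tail filter of its index set.  For each x the
   vectors phi(e_i) x lie in K times the image of the unit ball under the
   weakly compact orbit map a |-> phi(a) x, so they have a weak limit P x
   along U.  On the essential space phi(e_i) y -> y
   in norm, so P is the identity there; and P x lies in the essential space,
   which is a closed subspace, hence weakly closed by Hahn-Banach.  Thus P is a
   bounded idempotent with range the essential space. *)

From HB Require Import structures.
From mathcomp Require Import all_boot all_order all_algebra complex.
From mathcomp Require Import all_classical all_reals all_analysis.
From mathcomp Require Import lra.
Import Order.TTheory GRing.Theory Num.Theory numFieldNormedType.Exports.
Set Implicit Arguments.
Unset Strict Implicit.
Unset Printing Implicit Defensive.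
Local Open Scope classical_set_scope.
Local Open Scope ring_scope.
Local Open Scope complex_scope.

Section LinearFunction.
Variables (K : pzRingType) (U V : lmodType K) (f : U -> V).
Hypothesis f_lin : linear f.
Let fL : {linear U -> V} := HB.pack f (GRing.isLinear.Build K U V *:%R f f_lin).

Lemma linear_fun0 : f 0 = 0. Proof. exact: (linear0 fL). Qed.
Lemma linear_funD x y : f (x + y) = f x + f y. Proof. exact: (linearD fL). Qed.
Lemma linear_funB x y : f (x - y) = f x - f y. Proof. exact: (linearB fL). Qed.
Lemma linear_funZ k x : f (k *: x) = k *: f x. Proof. exact: (linearZZ fL). Qed.
End LinearFunction.

(** * Hahn-Banach *)

Section HahnBanach.
Variables (R : realType) (V : lmodType R) (p : V -> R).
Hypothesis p_subadd : forall x y, p (x + y) <= p x + p y.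
Hypothesis p_homog : forall (r : R) x, 0 <= r -> p (r *: x) = r * p x.

Lemma sublinear0 : p 0 = 0.
Proof. by rewrite -(scale0r (0 : V)) p_homog // mul0r. Qed.

(* Partial linear functionals dominated by [p] are handled through their
   graphs, so that extension is inclusion and a chain is bounded by its union. *)
Definition dominated_graph (G : set (V * R)) :=
  [/\ G (0, 0),
      (forall r x s y t, G (x, s) -> G (y, t) -> G (r *: x + y, r * s + t)),
      (forall t, G (0, t) -> t = 0)
    & (forall x t, G (x, t) -> t <= p x)].

Lemma dominated_graphZ G r x s :
  dominated_graph G -> G (x, s) -> G (r *: x, r * s).
Proof.
by case=> G00 Glin _ _ Gxs; have := Glin r _ _ _ _ Gxs G00; rewrite !addr0.
Qed.

Lemma dominated_graph_fun G x s t :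
  dominated_graph G -> G (x, s) -> G (x, t) -> s = t.
Proof.
case=> _ Glin Gfun _ Gxs Gxt; apply/eqP; rewrite eq_sym -subr_eq0; apply/eqP.
by apply: Gfun; have := Glin (-1) _ _ _ _ Gxs Gxt; rewrite scaleN1r mulN1r addNr addrC.
Qed.

Definition graph_ext (G : set (V * R)) (x1 : V) (c : R) : set (V * R) :=
  [set z | exists d s t, G (d, s) /\ z = (d + t *: x1, s + t * c)].

Lemma graph_ext_sub G x1 c : G `<=` graph_ext G x1 c.
Proof. by move=> [d s] Gds; exists d, s, 0; split=> //; rewrite scale0r mul0r !addr0. Qed.

Lemma graph_ext_point G x1 c : dominated_graph G -> graph_ext G x1 c (x1, c).
Proof. by case=> G00 _ _ _; exists 0, 0, 1; rewrite scale1r mul1r !add0r. Qed.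

Section PointExtension.
Variables (G : set (V * R)) (x1 : V) (c : R).
Hypotheses (dG : dominated_graph G) (x1_notin : forall s, ~ G (x1, s)).
Hypothesis c_upper : forall d s, G (d, s) -> s + c <= p (d + x1).
Hypothesis c_lower : forall d s, G (d, s) -> s - c <= p (d - x1).

Let ext_bound_scale x k (t : R) d s : (forall d s, G (d, s) -> s + k <= p (d + x)) ->
  0 < t -> G (d, s) -> s + t * k <= p (d + t *: x).
Proof.
move=> bound t0 Gds; have tN0 : t != 0 by rewrite gt_eqF.
have -> : d + t *: x = t *: (t^-1 *: d + x).
  by rewrite scalerDr scalerA divff // scale1r.
rewrite p_homog; last exact: ltW.
rewrite -[leLHS](mulVKf tN0) ler_pM2l // mulrDr mulrA mulVf // mul1r.
by apply: bound; apply: dominated_graphZ.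
Qed.

Lemma dominated_graph_ext : dominated_graph (graph_ext G x1 c).
Proof.
case: (dG) => G00 Glin Gfun Gdom; split.
- by exists 0, 0, 0; rewrite scale0r mul0r !addr0.
- move=> r _ _ _ _ [d [s [t [Gds [-> ->]]]]] [d' [s' [t' [Gds' [-> ->]]]]].
  exists (r *: d + d'), (r * s + s'), (r * t + t'); split; first exact: Glin.
  congr (_, _); first by rewrite scalerDr scalerA scalerDl addrACA.
  by rewrite mulrDr mulrA mulrDl addrACA.
- move=> u [d [s [t [Gds [E ->]]]]].
  have [t0|tN0] := eqVneq t 0.
    by move: E Gds; rewrite t0 scale0r mul0r !addr0 => <-; apply: Gfun.
  exfalso; apply: (@x1_notin (- t^-1 * s)).
  have dE : d = - (t *: x1) by apply/eqP; rewrite -addr_eq0 -E.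
  have -> : x1 = - t^-1 *: d by rewrite dE scalerN scaleNr opprK scalerA mulVf // scale1r.
  exact: dominated_graphZ.
- move=> _ _ [d [s [t [Gds [-> ->]]]]].
  have [t_lt0|t_gt0|->] := ltgtP t 0.
  + rewrite -[t]opprK mulNr -mulrN scaleNr -scalerN.
    by apply: ext_bound_scale; rewrite ?oppr_gt0.
  + exact: ext_bound_scale.
  + by rewrite scale0r mul0r !addr0; apply: Gdom.
Qed.
End PointExtension.

Lemma graph_ext_constant G x1 : dominated_graph G ->
  exists c, (forall d s, G (d, s) -> s + c <= p (d + x1)) /\
            (forall d s, G (d, s) -> s - c <= p (d - x1)).
Proof.
case=> G00 Glin _ Gdom.
pose S := [set z.2 - p (z.1 - x1) | z in G].
have S_ub d' s' : G (d', s') -> ubound S (p (d' + x1) - s').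
  move=> Gds' _ [[d s] Gds <-] /=; rewrite lerBrDr addrAC lerBlDr.
  have := Gdom _ _ (Glin 1 _ _ _ _ Gds Gds'); rewrite scale1r mul1r => /le_trans.
  by apply; have -> : d + d' = (d' + x1) + (d - x1) by rewrite addrCA addrK.
have S0 : S !=set0 by exists (0 - p (0 - x1)), (0, 0).
exists (sup S); split=> [d s Gds|d s Gds].
- by rewrite addrC -lerBrDr; apply: ge_sup S0 (S_ub _ _ Gds).
- rewrite lerBlDl -lerBlDr; apply: sup_upper_bound; last by exists (d, s).
  by split=> //; exists (p (0 + x1) - 0); apply: S_ub.
Qed.

Lemma dominated_graph_extend G x : dominated_graph G -> (forall t, ~ G (x, t)) ->
  exists G', [/\ dominated_graph G', G `<=` G' & exists t, G' (x, t)].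
Proof.
move=> dG xG; have [c [c_upper c_lower]] := graph_ext_constant x dG.
exists (graph_ext G x c); split; last by exists c; apply: graph_ext_point.
- exact: dominated_graph_ext.
- exact: graph_ext_sub.
Qed.

Lemma dominated_graph_bigcup (F : set (set (V * R))) :
  F !=set0 -> F `<=` dominated_graph -> total_on F subset ->
  dominated_graph (\bigcup_(G in F) G).
Proof.
move=> [G1 FG1] Fdom Ftot; split.
- by exists G1 => //; case: (Fdom _ FG1).
- move=> r x s y t [Gx FGx Gxs] [Gy FGy Gyt].
  have [GxGy|GyGx] := Ftot _ _ FGx FGy.
  + by exists Gy => //; case: (Fdom _ FGy) => _ Glin _ _; apply: Glin => //; apply: GxGy.
  + by exists Gx => //; case: (Fdom _ FGx) => _ Glin _ _; apply: Glin => //; apply: GyGx.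
- by move=> t [G FG G0t]; case: (Fdom _ FG) => _ _ Gfun _; apply: Gfun.
- by move=> x t [G FG Gxt]; case: (Fdom _ FG) => _ _ _ Gdom; apply: Gdom.
Qed.

Theorem hahn_banach G0 : dominated_graph G0 ->
  exists2 G, dominated_graph G & G0 `<=` G /\ forall x, exists t, G (x, t).
Proof.
move=> dG0; pose T := {G | dominated_graph G /\ G0 `<=` G}.
pose le (G1 G2 : T) := `[< sval G1 `<=` sval G2 >].
have t0 : T := exist _ G0 (conj dG0 (@subset_refl _ G0)).
have [||A Atot|[G [dG G0G]] Gmax] := @ZL_preorder T t0 le.
- by move=> G; apply/asboolP.
- by move=> ? ? ? /asboolP r_s /asboolP s_t; apply/asboolP; apply: subset_trans s_t.
- have [[G1 AG1]|A0] := pselect (A !=set0); last first.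
    by exists t0 => G AG; exfalso; apply: A0; exists G.
  pose U := \bigcup_(G in sval @` A) G.
  have dU : dominated_graph U.
    apply: dominated_graph_bigcup; first by exists (sval G1), G1.
      by move=> _ [G _ <-]; case: (svalP G).
    move=> _ _ [G AG <-] [G' AG' <-].
    by case: (Atot _ _ AG AG') => /asboolP; [left|right].
  have G0U : G0 `<=` U.
    by move=> z G0z; exists (sval G1); [exists G1 | case: (svalP G1) => _; apply].
  exists (exist _ U (conj dU G0U)) => G AG; apply/asboolP => z Gz.
  by exists (sval G) => //; exists G.
- exists G => //; split=> // x; apply: contrapT => /forallNP xG.
  have [G' [dG' GG' [t G'xt]]] := dominated_graph_extend dG xG.
  have /asboolP G'G := Gmax (exist _ G' (conj dG' (subset_trans G0G GG'))) (asboolT GG').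
  by apply: (xG t); apply: G'G.
Qed.

Definition graph_fun (G : set (V * R)) x := xget 0 [set t | G (x, t)].

Lemma graph_funE G x t : dominated_graph G -> G (x, t) -> graph_fun G x = t.
Proof.
move=> dG Gxt; apply: xget_unique => // s Gxs.
exact: dominated_graph_fun dG Gxs Gxt.
Qed.

Corollary hahn_banach_point x0 : exists u : V -> R,
  [/\ forall r x y, u (r *: x + y) = r * u x + u y,
      forall x, - p (- x) <= u x <= p x & u x0 = p x0].
Proof.
have dpoint : dominated_graph [set (0, 0)].
  split=> [//|r _ _ _ _ [-> ->] [-> ->]|t [->]//|_ _ [-> ->]].
    by rewrite scaler0 mulr0 !addr0.
  by rewrite sublinear0.
have [G0 [dG0 G0x0]] : exists G0, dominated_graph G0 /\ G0 (x0, p x0).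
  have [->|x0N0] := eqVneq x0 0; first by exists [set (0, 0)]; rewrite sublinear0.
  exists (graph_ext [set (0, 0)] x0 (p x0)); split; last exact: graph_ext_point.
  apply: dominated_graph_ext => // [s [/eqP]|_ _ [-> ->]|_ _ [-> ->]].
  - by rewrite (negPf x0N0).
  - by rewrite !add0r.
  - rewrite !add0r -subr_ge0 opprK addrC.
    by have := p_subadd x0 (- x0); rewrite subrr sublinear0.
have [G dG [G0G Gtotal]] := hahn_banach dG0.
have uE x : G (x, graph_fun G x) by have [t Gxt] := Gtotal x; rewrite (graph_funE dG Gxt).
exists (graph_fun G); split=> [r x y||].
- by apply: graph_funE => //; case: dG => _ Glin _ _; apply: Glin; apply: uE.
- move=> x; case: (dG) => _ _ _ Gdom; rewrite lerNl Gdom // andbT.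
  by have := Gdom _ _ (dominated_graphZ (-1) dG (uE x)); rewrite scaleN1r mulN1r.
- exact/graph_funE/G0G.
Qed.
End HahnBanach.

Definition realify (R : realType) (X : lmodType R[i]) : Type := X.
HB.instance Definition _ (R : realType) (X : lmodType R[i]) :=
  GRing.Zmodule.copy (realify X) X.

Section Realify.
Variables (R : realType) (X : lmodType R[i]).
Definition rscale (r : R) (x : realify X) : realify X := (r%:C *: (x : X) : X).
Lemma rscaleA a b v : rscale a (rscale b v) = rscale (a * b) v.
Proof. by rewrite /rscale scalerA -rmorphM. Qed.
Lemma rscale1 : left_id 1 rscale.
Proof. by move=> v; rewrite /rscale rmorph1 scale1r. Qed.
Lemma rscaleDr : right_distributive rscale +%R.
Proof. by move=> a u v; rewrite /rscale scalerDr. Qed.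
Lemma rscaleDl v : {morph rscale^~ v: a b / a + b}.
Proof. by move=> a b; rewrite /rscale rmorphD scalerDl. Qed.
End Realify.

HB.instance Definition _ (R : realType) (X : lmodType R[i]) :=
  GRing.Zmodule_isLmodule.Build R (realify X) (@rscaleA R X) (@rscale1 R X)
   (@rscaleDr R X) (@rscaleDl R X).

Section Complexification.
Variables (R : realType) (X : lmodType R[i]) (u : X -> R).
Hypothesis u_lin : forall (r : R) x y, u (r%:C *: x + y) = r * u x + u y.

(* The complex-linear functional with real part [u]: its imaginary part at [x]
   is the real part at [- 'i x]. *)
Definition complexify x : R[i] := (u x)%:C - 'i * (u ('i *: x))%:C.

Let uD x y : u (x + y) = u x + u y.
Proof. by have := u_lin 1 x y; rewrite rmorph1 scale1r mul1r. Qed.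

Let uZ (r : R) x : u (r%:C *: x) = r * u x.
Proof.
have u0 : u 0 = 0 by apply: (addrI (u 0)); rewrite -uD !addr0.
by have := u_lin r x 0; rewrite !addr0 u0 addr0.
Qed.

Let uN x : u (- x) = - u x.
Proof. by have := uZ (-1) x; rewrite rmorphN rmorph1 scaleN1r mulN1r. Qed.

Let complexify_i x : complexify ('i *: x) = 'i * complexify x.
Proof.
have ii : 'i * 'i = -1 :> R[i] by rewrite -expr2 sqr_i.
rewrite /complexify scalerA ii scaleN1r uN rmorphN mulrN opprK.
by rewrite mulrBr mulrA ii mulN1r opprK addrC.
Qed.

Lemma complexify_linear : linear (complexify : X -> R[i]^o).
Proof.
have cD x y : complexify (x + y) = complexify x + complexify y.
  by rewrite /complexify scalerDr !uD !rmorphD mulrDr opprD addrACA.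
have cZ (r : R) x : complexify (r%:C *: x) = r%:C * complexify x.
  rewrite /complexify.
  have -> : 'i *: (r%:C *: x) = r%:C *: ('i *: x) by rewrite !scalerA mulrC.
  by rewrite !uZ !rmorphM mulrBr mulrCA.
move=> k x y; rewrite cD; congr (_ + _).
by rewrite [k]complexE scalerDl -scalerA cD cZ complexify_i cZ scalerDl -scalerA.
Qed.

Lemma Re_complexify x : complex.Re (complexify x) = u x.
Proof. by rewrite /= !(mul0r, mulr0, mul1r, subr0, oppr0, addr0). Qed.
End Complexification.

Section RealNorm.
Variables (R : realType) (X : normedModType R[i]).

Definition rnorm (x : X) : R := complex.Re `|x|.

Lemma rnormE x : `|x| = (rnorm x)%:C.
Proof. by rewrite /rnorm RRe_real // normr_real. Qed.

Lemma rnorm_ge0 x : 0 <= rnorm x.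
Proof. by rewrite -ler0c -rnormE. Qed.

Lemma ler_rnormD x y : rnorm (x + y) <= rnorm x + rnorm y.
Proof. by rewrite -lecR rmorphD; have := ler_normD x y; rewrite !rnormE. Qed.

Lemma rnormN x : rnorm (- x) = rnorm x.
Proof. by rewrite /rnorm normrN. Qed.

Lemma normc_real (r : R) : `|r%:C| = `|r|%:C.
Proof. by rewrite normc_def /= expr0n /= addr0 sqrtr_sqr. Qed.

Lemma rnormZ (r : R) x : rnorm (r%:C *: x) = `|r| * rnorm x.
Proof. by rewrite /rnorm normrZ normc_real rnormE -rmorphM. Qed.

Lemma lec_Re (w z : R[i]) : w <= z -> complex.Re w <= complex.Re z.
Proof. by rewrite lecE => /andP[]. Qed.

Lemma gt0_Re (e : R[i]) : 0 < e -> 0 < complex.Re e.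
Proof. by move=> e_gt0; rewrite -ltcR RRe_real ?gtr0_real. Qed.

Lemma normc_i : `|'i| = 1 :> R[i].
Proof. by rewrite normc_def /= expr0n /= add0r expr1n sqrtr1. Qed.

Lemma rnormiZ x : rnorm ('i *: x) = rnorm x.
Proof. by rewrite /rnorm normrZ normc_i mul1r. Qed.
End RealNorm.

Section ComplexHahnBanach.
Variables (R : realType) (X : normedModType R[i]) (p : X -> R).
Hypothesis p_subadd : forall x y, p (x + y) <= p x + p y.
Hypothesis p_homog : forall (r : R) x, 0 < r -> p (r%:C *: x) <= r * p x.
Hypothesis p_le_rnorm : forall x, p x <= rnorm x.

Let p0 : p 0 = 0.
Proof.
apply/eqP; rewrite eq_le; apply/andP; split.
  by apply: le_trans (p_le_rnorm 0) _; rewrite /rnorm normr0.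
by have := p_subadd 0 0; rewrite addr0 -[leLHS]addr0 lerD2l.
Qed.

Let p_homogE (r : R) x : 0 <= r -> p (r%:C *: x) = r * p x.
Proof.
rewrite le_eqVlt => /predU1P[<-|r_gt0]; first by rewrite scale0r mul0r p0.
apply/eqP; rewrite eq_le p_homog //=; have rN0 : r != 0 by rewrite gt_eqF.
have := @p_homog r^-1 (r%:C *: x); rewrite invr_gt0 => /(_ r_gt0).
rewrite scalerA -rmorphM mulVf // scale1r => /(ler_wpM2l (ltW r_gt0)).
by rewrite mulrA divff // mul1r.
Qed.

Theorem complex_hahn_banach x0 : exists f : X -> R[i],
  [/\ linear (f : X -> R[i]^o), forall x, `|f x| <= 2 * `|x|,
      forall x, complex.Re (f x) <= p x & complex.Re (f x0) = p x0].
Proof.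
have [u [u_lin u_bound ux0]] :=
  @hahn_banach_point R (realify X) p p_subadd p_homogE x0.
have u_le x : `|u x| <= rnorm x.
  have /andP[pN_le_u u_le_p] := u_bound x.
  rewrite ler_norml (le_trans u_le_p) // andbT.
  by apply: le_trans pN_le_u; rewrite lerN2 -(rnormN x).
exists (complexify u); split=> [||x|].
- exact: complexify_linear.
- move=> x; apply: le_trans (ler_normB _ _) _.
  rewrite normrM normc_i mul1r !normc_real rnormE -rmorphD.
  have -> : 2 * (rnorm x)%:C = (2 * rnorm x)%:C by rewrite rmorphM rmorph_nat.
  rewrite lecR.
  by have := u_le x; have := u_le ('i *: x); rewrite rnormiZ; lra.
- by rewrite Re_complexify; have /andP[] := u_bound x.
- by rewrite Re_complexify.
Qed.
End ComplexHahnBanach.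

Lemma linear_le_continuous (K : numFieldType) (V W : normedModType K)
    (f : V -> W) (k : K) :
  k \is Num.real -> linear f -> (forall x, `|f x| <= k * `|x|) -> continuous f.
Proof.
move=> k_real f_lin f_le.
pose fL : {linear V -> W} := HB.pack f (GRing.isLinear.Build K V W *:%R f f_lin).
apply: (@bounded_linear_continuous _ _ _ fL); apply/linear_boundedP.
exists k; split=> // r k_lt_r x.
by apply: le_trans (f_le x) _; rewrite ler_wpM2r // ltW.
Qed.

Lemma ptws_eval_continuous (U : Type) (V : topologicalType) (u : U) :
  continuous (fun g : {ptws U -> V} => g u).
Proof.
move=> g; have /cvg_sup/(_ u) gu : (g : {ptws U -> V}) --> g by apply: cvg_id.
by move=> B /(@initial_continuous _ V (fun h : U -> V => h u) g) /gu.
Qed.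

Lemma ultra_fmap (T U : Type) (g : T -> U) (F : set_system T) :
  UltraFilter F -> UltraFilter (g @ F).
Proof.
move=> FU; split=> [|G PG gFG]; first exact: fmap_proper_filter.
rewrite predeqE => A; split=> [GA|/gFG//].
have [//|FnA] := in_ultra_setVsetC (g @^-1` A) FU.
have GnA : G (~` A) by apply: gFG.
by exfalso; apply: (filter_not_empty G); rewrite -(setICr A); apply: filterI.
Qed.

Lemma directed_ultrafilter (I : Type) (le : I -> I -> Prop) : inhabited I ->
  (forall i j k, le i j -> le j k -> le i k) ->
  (forall i j, exists k, le i k /\ le j k) ->
  exists U : set_system I, UltraFilter U /\ forall i0, U [set i | le i0 i].
Proof.
move=> [i0] le_trans le_dir.
pose tails := filter_from [set: I] (fun i => [set j | le i j]).
have tails_proper : ProperFilter tails.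
  apply: filter_from_proper => [|i _]; last by have [k [ik _]] := le_dir i i; exists k.
  apply: filter_fromT_filter; first by exists i0.
  move=> i j; have [k [ik jk]] := le_dir i j.
  by exists k => l kl; split; [apply: le_trans ik kl | apply: le_trans jk kl].
have [U [U_ultra tailsU]] := ultraFilterLemma tails_proper.
by exists U; split=> // i; apply: tailsU; exists i.
Qed.

Section Dual.
Variables (R : realType) (X : normedModType R[i]).

Lemma dual_linear (f : dual X) : linear (sval f).
Proof. by case: (svalP f). Qed.

Lemma dual_weak_continuous (f : dual X) : continuous (sval f : weakT X -> R[i]^o).
Proof.
move=> z B /(@ptws_eval_continuous (dual X) R[i]^o f (@weak_eval R X z)).
exact: (@initial_continuous _ _ (@weak_eval R X) z).
Qed.

Lemma hahn_banach_dual (p : X -> R) :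
  (forall x y, p (x + y) <= p x + p y) ->
  (forall (r : R) x, 0 < r -> p (r%:C *: x) <= r * p x) ->
  (forall x, p x <= rnorm x) ->
  forall x0, exists f : dual X,
    (forall x, complex.Re (sval f x) <= p x) /\ complex.Re (sval f x0) = p x0.
Proof.
move=> p_subadd p_homog p_le x0.
have [f [f_lin f_le f_Re fx0]] := complex_hahn_banach p_subadd p_homog p_le x0.
have f_cont : continuous (f : X -> R[i]^o).
  exact: (@linear_le_continuous _ X R[i]^o f 2 (@realn _ 2) f_lin f_le).
by exists (exist _ (f : X -> R[i]^o) (conj f_lin f_cont)).
Qed.

Lemma norming_functional z : exists f : dual X,
  (forall y, complex.Re (sval f y) <= rnorm y) /\ complex.Re (sval f z) = rnorm z.
Proof.
apply: hahn_banach_dual (@ler_rnormD R X) _ (fun x => lexx _) z => r x r_gt0.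
by rewrite rnormZ gtr0_norm.
Qed.

Lemma dual_separates z : z != 0 -> exists f : dual X, sval f z != 0.
Proof.
move=> zN0; have [f [_ fz]] := norming_functional z; exists f.
apply: contra zN0 => /eqP f0; move: fz; rewrite f0 /= => /esym rnorm0.
by rewrite -normr_eq0 rnormE rnorm0.
Qed.

Section Annihilator.
Variable E : set X.
Hypotheses (E0 : E 0) (E_lin : forall k x y, E x -> E y -> E (k *: x + y)).

Definition subspace_dist y := inf [set rnorm (y - e) | e in E].

Let dists_neq0 y : [set rnorm (y - e) | e in E] !=set0.
Proof. by exists (rnorm (y - 0)), 0. Qed.

Let dists_ge0 y : lbound [set rnorm (y - e) | e in E] 0.
Proof. by move=> _ [e _ <-]; apply: rnorm_ge0. Qed.

Lemma subspace_dist_le y e : E e -> subspace_dist y <= rnorm (y - e).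
Proof. by move=> Ee; apply: ge_inf; [exists 0; apply: dists_ge0 | exists e]. Qed.

Lemma subspace_dist_glb y v :
  (forall e, E e -> v <= rnorm (y - e)) -> v <= subspace_dist y.
Proof. by move=> v_le; apply: lb_le_inf => // _ [e Ee <-]; apply: v_le. Qed.

Lemma subspace_dist_ge0 y : 0 <= subspace_dist y.
Proof. by apply: subspace_dist_glb => e _; apply: rnorm_ge0. Qed.

Lemma subspace_dist_le_rnorm y : subspace_dist y <= rnorm y.
Proof. by have := subspace_dist_le y E0; rewrite subr0. Qed.

Lemma subspace_distD x y :
  subspace_dist (x + y) <= subspace_dist x + subspace_dist y.
Proof.
rewrite -lerBlDr; apply: subspace_dist_glb => e1 Ee1.
rewrite lerBlDr -lerBlDl; apply: subspace_dist_glb => e2 Ee2.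
rewrite lerBlDl; apply: le_trans (subspace_dist_le _ (E_lin 1 Ee1 Ee2)) _.
by rewrite scale1r opprD addrACA; apply: ler_rnormD.
Qed.

Lemma subspace_distZ (r : R) y :
  0 < r -> subspace_dist (r%:C *: y) <= r * subspace_dist y.
Proof.
move=> r_gt0; rewrite mulrC -ler_pdivrMr //; apply: subspace_dist_glb => e Ee.
rewrite ler_pdivrMr //; apply: le_trans (subspace_dist_le _ (E_lin r%:C Ee E0)) _.
by rewrite addr0 -scalerBr rnormZ gtr0_norm // mulrC.
Qed.

Lemma subspace_dist0 e : E e -> subspace_dist e = 0.
Proof.
move=> Ee; apply/eqP; rewrite eq_le subspace_dist_ge0 andbT.
by apply: le_trans (subspace_dist_le e Ee) _; rewrite subrr /rnorm normr0.
Qed.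

Lemma subspace_dist_gt0 y : ~ closure E y -> 0 < subspace_dist y.
Proof.
move=> yE; rewrite lt_neqAle subspace_dist_ge0 andbT; apply/negP => /eqP d0.
apply: yE => B /nbhs_normP[eps eps_gt0 epsB].
have [_ [e Ee <-] ye_lt] :
    exists2 v, [set rnorm (y - e) | e in E] v & v < complex.Re eps.
  by apply: inf_lt; [apply: dists_neq0 | rewrite -/(subspace_dist y) -d0 gt0_Re].
exists e; split=> //; apply: epsB; change (`|y - e| < eps).
by rewrite rnormE -(RRe_real (gtr0_real eps_gt0)) ltcR.
Qed.

Lemma annihilator_separates z : ~ closure E z ->
  exists f : dual X, (forall e, E e -> sval f e = 0) /\ sval f z != 0.
Proof.
move=> zE; have [f [f_Re fz]] :=
  hahn_banach_dual subspace_distD subspace_distZ subspace_dist_le_rnorm z.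
exists f; split; last first.
  by apply/eqP => f0; have := subspace_dist_gt0 zE; rewrite -fz f0 ltxx.
have fZ k x : sval f (k *: x) = k * sval f x := linear_funZ (dual_linear f) k x.
have Re_le0 x : E x -> complex.Re (sval f x) <= 0.
  by move=> Ex; rewrite -(subspace_dist0 Ex) f_Re.
have Re0 x : E x -> complex.Re (sval f x) = 0.
  move=> Ex; apply/eqP; rewrite eq_le Re_le0 //= -oppr_le0.
  by have := Re_le0 _ (E_lin (-1) Ex E0); rewrite addr0 fZ mulN1r; case: (sval f x).
move=> e Ee; have Eie : E ('i *: e) by have := E_lin 'i Ee E0; rewrite addr0.
move: (Re0 _ Eie) (Re0 _ Ee); rewrite fZ; case: (sval f e) => a b /= + ->.
by rewrite mul0r mul1r sub0r => /eqP; rewrite oppr_eq0 => /eqP ->.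
Qed.
End Annihilator.
End Dual.

(** * Weak limits *)

Section WeakLimit.
Variables (R : realType) (X : normedModType R[i]) (I : Type) (F : set_system I).
Context {FF : ProperFilter F}.

Definition weak_lim (u : I -> X) (z : X) :=
  forall f : dual X, sval f \o u @ F --> sval f z.

Lemma cvg_Re_le (g : I -> R[i]^o) (w : R[i]^o) (c : R) :
  g @ F --> w -> (forall i, complex.Re (g i) <= c) -> complex.Re w <= c.
Proof.
move=> gw g_le; rewrite leNgt; apply/negP => c_lt.
have e_gt0 : 0 < (complex.Re w - c)%:C by rewrite ltcR subr_gt0.
move/cvgrPdist_lt: gw => /(_ _ e_gt0) /filter_ex[i /= wgi].
have := le_lt_trans (normc_ge_Re (w - g i)) wgi; rewrite ltcR.
have -> : complex.Re (w - g i) = complex.Re w - complex.Re (g i).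
  by case: (w) (g i) => ? ? [? ?].
by move=> /(le_lt_trans (ler_norm _)); have := g_le i; lra.
Qed.

Lemma cvg_weak_lim u z : u @ F --> z -> weak_lim u z.
Proof. by move=> uz f; apply: (cvg_comp _ _ uz (proj2 (svalP f) z)). Qed.

Lemma weak_lim_unique u z1 z2 : weak_lim u z1 -> weak_lim u z2 -> z1 = z2.
Proof.
move=> uz1 uz2; apply/eqP; rewrite -subr_eq0; apply: contraT => /dual_separates[f].
by rewrite (linear_funB (dual_linear f)) (norm_cvg_unique (uz1 f) (uz2 f)) subrr eqxx.
Qed.

Lemma weak_limZ k u z : weak_lim u z -> weak_lim (fun i => k *: u i) (k *: z).
Proof.
move=> uz f; rewrite /comp (linear_funZ (dual_linear f)).
under eq_fun do rewrite (linear_funZ (dual_linear f)).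
exact: cvgMl_tmp (uz f).
Qed.

Lemma weak_limD u v z w :
  weak_lim u z -> weak_lim v w -> weak_lim (fun i => u i + v i) (z + w).
Proof.
move=> uz vw f; rewrite /comp (linear_funD (dual_linear f)).
under eq_fun do rewrite (linear_funD (dual_linear f)).
exact: cvgD (uz f) (vw f).
Qed.

Lemma weak_lim_rnorm_le u z c :
  weak_lim u z -> (forall i, rnorm (u i) <= c) -> rnorm z <= c.
Proof.
move=> uz u_le; have [f [f_le fz]] := norming_functional z.
by rewrite -fz; apply: cvg_Re_le (uz f) _ => i; apply: le_trans (f_le _) (u_le i).
Qed.

Lemma weak_lim_closure (E : set X) u z :
  E 0 -> (forall k x y, E x -> E y -> E (k *: x + y)) ->
  weak_lim u z -> (forall i, E (u i)) -> closure E z.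
Proof.
move=> E0 E_lin uz Eu; apply: contrapT => /(annihilator_separates E0 E_lin)[f [fE fz]].
have : sval f \o u @ F --> (0 : R[i]^o).
  by rewrite [_ \o _](_ : _ = cst 0); [apply: cvg_cst | apply: funext => i /=; apply: fE].
by move/(norm_cvg_unique (uz f)); apply/eqP.
Qed.

Lemma rel_weakly_compact_weak_lim (S : set X) u : UltraFilter F ->
  rel_weakly_compact S -> (forall i, S (u i)) -> exists z, weak_lim u z.
Proof.
move=> FU; rewrite /rel_weakly_compact compact_ultra => S_cpt Su.
pose uw : I -> weakT X := u.
have [|z [_ uz]] := S_cpt (uw @ F) (ultra_fmap uw FU).
  apply: (@filterS _ F _ setT); last exact: filterT.
  by move=> i _; apply: subset_closure; apply: Su.
by exists z => f; apply: (cvg_comp _ _ uz (@dual_weak_continuous _ _ f z)).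
Qed.
End WeakLimit.

Section LinSpan.
Variables (R : realType) (W : normedModType R[i]) (S : set W).

Lemma lin_span_sub : S `<=` lin_span S.
Proof.
move=> x Sx; exists 1%N, (fun=> 1), (fun=> x).
by split=> [//|]; rewrite big_ord1 scale1r.
Qed.

Lemma lin_span0 : lin_span S 0.
Proof. by exists 0%N, (fun=> 0), (fun=> 0); split=> [[]//|]; rewrite big_ord0. Qed.

Lemma lin_span_lin k x y :
  lin_span S x -> lin_span S y -> lin_span S (k *: x + y).
Proof.
move=> [n [c [v [Sv ->]]]] [m [c' [v' [Sv' ->]]]]; exists (n + m)%N.
exists (fun i => match fintype.split i with inl j => k * c j | inr j => c' j end).
exists (fun i => match fintype.split i with inl j => v j | inr j => v' j end).
split=> [i|]; first by case: (fintype.split i).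
rewrite big_split_ord scaler_sumr; congr (_ + _); apply: eq_bigr => j _.
  by rewrite (unsplitK (inl j)) scalerA.
by rewrite (unsplitK (inr j)).
Qed.

Lemma lin_span_ind (P : set W) : P 0 ->
  (forall k x y, P x -> P y -> P (k *: x + y)) -> S `<=` P -> lin_span S `<=` P.
Proof.
move=> P0 P_lin SP _ [n [c [v [Sv ->]]]].
elim: n c v Sv => [|n IHn] c v Sv; first by rewrite big_ord0.
rewrite big_ord_recr /= addrC; apply: P_lin; first exact: SP.
by apply: IHn => i; apply: Sv.
Qed.
End LinSpan.

Section BoundedNet.
Variables (R : realType) (X : normedModType R[i]) (I : Type) (F : set_system I).
Context {FF : Filter F}.
Variables (T : I -> X -> X) (K : R).
Hypotheses (T_lin : forall i, linear (T i)) (K_ge0 : 0 <= K).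
Hypothesis T_le : forall i x, rnorm (T i x) <= K * rnorm x.

Definition approx_fixed y := (fun i => T i y) @ F --> y.

Lemma approx_fixed0 : approx_fixed 0.
Proof.
rewrite /approx_fixed; under eq_fun do rewrite (linear_fun0 (T_lin _)).
exact: cvg_cst.
Qed.

Lemma approx_fixed_lin k x y :
  approx_fixed x -> approx_fixed y -> approx_fixed (k *: x + y).
Proof.
rewrite /approx_fixed => Tx Ty; under eq_fun do rewrite (T_lin _ k x y).
exact: cvgD (cvgZl_tmp (k := k) Tx) Ty.
Qed.

Lemma closed_approx_fixed : closed approx_fixed.
Proof.
move=> y y_cl; apply/cvgrPdist_lt => eps eps_gt0.
have er_gt0 := gt0_Re eps_gt0; set er := complex.Re eps in er_gt0.
have K1_gt0 : 0 < 1 + K by rewrite ltr_pwDl.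
have d_gt0 : 0 < (er / 2 / (1 + K))%:C by rewrite ltcR !divr_gt0.
have [y0 [Ty0 yy0]] := y_cl _ (nbhsx_ballx y _ d_gt0).
move: yy0; rewrite -ball_normE /= rnormE ltcR ltr_pdivlMr // => yy0.
have er2_gt0 : 0 < (er / 2)%:C by rewrite ltcR divr_gt0.
move/cvgrPdist_lt: Ty0 => /(_ _ er2_gt0); apply: filterS => i.
rewrite rnormE ltcR -(RRe_real (gtr0_real eps_gt0)) rnormE ltcR -/er => y0Ty0.
have -> : y - T i y = (y - y0) + (y0 - T i y0) + T i (y0 - y).
  by rewrite (linear_funB (T_lin i)) !addrA !subrK.
have := T_le i (y0 - y); rewrite -opprB rnormN => Tyy0.
have := ler_rnormD (y - y0 + (y0 - T i y0)) (T i (- (y - y0))).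
have := ler_rnormD (y - y0) (y0 - T i y0).
nra.
Qed.
End BoundedNet.

(** * The projection onto the essential space *)

Section NormBounds.
Variable R : realType.

Lemma norm_bounded_rnorm (T : Type) (W : normedModType R[i]) (g : T -> W) (M : R[i]) :
  (forall t, `|g t| <= M) -> exists2 K : R, 0 < K & forall t, rnorm (g t) <= K.
Proof.
move=> g_le; exists (`|complex.Re M| + 1) => [|t]; first by rewrite ltr_pwDr.
by apply: le_trans (lec_Re (g_le t)) _; apply: le_trans (ler_norm _) _; rewrite lerDl.
Qed.

Lemma representation_rnorm_le (A X : completeNormedModType R[i]) (mul : A -> A -> A)
    (phi : A -> X -> X) :
  representation mul phi ->
  exists2 K : R, 0 <= K & forall a x, rnorm (phi a x) <= K * rnorm a * rnorm x.
Proof.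
case=> _ _ _ [M phi_le]; exists `|complex.Re M| => // a x.
apply: le_trans (lec_Re (phi_le a x)) _; rewrite !rnormE -mulrA -rmorphM.
case: M {phi_le} => m m' /=; rewrite mulr0 subr0 mulrA.
by rewrite ler_wpM2r ?rnorm_ge0 // ler_wpM2r ?rnorm_ge0 // ler_norm.
Qed.
End NormBounds.

Section EssentialProjection.
Variables (R : realType) (A X : completeNormedModType R[i]) (mul : A -> A -> A).
Variable phi : A -> X -> X.
Hypothesis phi_rep : representation mul phi.
Hypothesis orbit_wcompact : forall x, weakly_compact_op (fun a => phi a x).
Variables (I : Type) (le : I -> I -> Prop) (e : I -> A) (U : set_system I).
Context {U_ultra : UltraFilter U}.
Hypothesis U_tails : forall i0, U [set i | le i0 i].
Hypothesis e_approx : forall a (eps : R[i]), 0 < eps ->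
  exists i0, forall i, le i0 i -> `|mul (e i) a - a| < eps.
Variables (Kphi Ke : R).
Hypotheses (Kphi_ge0 : 0 <= Kphi) (Ke_gt0 : 0 < Ke).
Hypothesis phi_le : forall a x, rnorm (phi a x) <= Kphi * rnorm a * rnorm x.
Hypothesis e_le : forall i, rnorm (e i) <= Ke.

Let phi_linear a : linear (phi a).
Proof. by case: phi_rep => phi_lin _ _ _; apply: phi_lin. Qed.

Let phi_linear_left x : linear (phi^~ x).
Proof. by case: phi_rep => _ phi_lin _ _ k a b; apply: phi_lin. Qed.

Let phi_mul a b x : phi (mul a b) x = phi a (phi b x).
Proof. by case: phi_rep => _ _ phiM _; apply: phiM. Qed.

Let phi_e_le i x : rnorm (phi (e i) x) <= Kphi * Ke * rnorm x.
Proof.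
apply: le_trans (phi_le _ _) _.
by rewrite ler_wpM2r ?rnorm_ge0 // ler_wpM2l.
Qed.

Local Notation span := (lin_span [set phi a x | a in [set: A] & x in [set: X]]).

Lemma approx_unit_orbit a x : (fun i => phi (e i) (phi a x)) @ U --> phi a x.
Proof.
apply/cvgrPdist_lt => eps eps_gt0.
have er_gt0 := gt0_Re eps_gt0; set er := complex.Re eps in er_gt0.
have c_gt0 : 0 < Kphi * rnorm x + 1 by rewrite ltr_pwDr // mulr_ge0 // rnorm_ge0.
have d_gt0 : 0 < (er / (Kphi * rnorm x + 1))%:C by rewrite ltcR divr_gt0.
have [i0 e_near] := e_approx a d_gt0.
apply: filterS (U_tails i0) => i /e_near; rewrite rnormE ltcR => ea_lt.
rewrite -(RRe_real (gtr0_real eps_gt0)) rnormE ltcR -/er -phi_mul.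
rewrite -(linear_funB (phi_linear_left x)).
rewrite -rnormN opprB ltr_pdivlMr // in ea_lt.
have := phi_le (a - mul (e i) a) x.
have := mulr_ge0 Kphi_ge0 (rnorm_ge0 x); have := rnorm_ge0 (a - mul (e i) a).
nra.
Qed.

Lemma approx_unit_essential y :
  essential_space phi y -> (fun i => phi (e i) y) @ U --> y.
Proof.
pose T i := phi (e i); have T_lin i : linear (T i) by apply: phi_linear.
have KKe_ge0 : 0 <= Kphi * Ke by rewrite mulr_ge0 // ltW.
have spanT : span `<=` approx_fixed U T.
  apply: lin_span_ind; [exact: approx_fixed0 | exact: approx_fixed_lin |].
  by move=> _ [a _ [x _ <-]]; apply: approx_unit_orbit.
by move=> /(closureS spanT) /(closed_approx_fixed T_lin KKe_ge0 phi_e_le).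
Qed.

Lemma orbit_weak_lim x : exists z, weak_lim U (fun i => phi (e i) x) z.
Proof.
pose u i := phi ((Ke^-1)%:C *: e i) x.
have [i|z uz] := @rel_weakly_compact_weak_lim R X I U _ _ u U_ultra (@orbit_wcompact x).
  exists ((Ke^-1)%:C *: e i) => //=; rewrite normrZ normc_real rnormE -rmorphM.
  by rewrite lecR ger0_norm ?invr_ge0 ?(ltW Ke_gt0) // ler_pdivrMl // mulr1.
exists (Ke%:C *: z); rewrite [X in weak_lim _ X](_ : _ = fun i => Ke%:C *: u i).
  exact: weak_limZ.
apply: funext => i; rewrite /u (linear_funZ (phi_linear_left x)) scalerA.
by rewrite -rmorphM divff ?gt_eqF // scale1r.
Qed.

Definition essential_proj x := xget 0 (weak_lim U (fun i => phi (e i) x)).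

Lemma essential_projP x : weak_lim U (fun i => phi (e i) x) (essential_proj x).
Proof. exact: xgetPex (orbit_weak_lim x). Qed.

Lemma essential_proj_linear : linear essential_proj.
Proof.
move=> k x y /=; apply: (weak_lim_unique (@essential_projP (k *: x + y))).
rewrite [X in weak_lim _ X](_ : _ = fun i => k *: phi (e i) x + phi (e i) y).
  by apply: weak_limD; [apply: weak_limZ|]; apply: essential_projP.
by apply: funext => i; apply: phi_linear.
Qed.

Lemma essential_proj_le x : rnorm (essential_proj x) <= Kphi * Ke * rnorm x.
Proof. exact: weak_lim_rnorm_le (@essential_projP x) (phi_e_le^~ x). Qed.

Lemma essential_proj_range x : essential_space phi (essential_proj x).
Proof.
apply: (weak_lim_closure _ _ (@essential_projP x)) => [||i].
- exact: lin_span0.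
- exact: lin_span_lin.
- by apply: lin_span_sub; exists (e i) => //; exists x.
Qed.

Lemma essential_proj_id y : essential_space phi y -> essential_proj y = y.
Proof.
move=> Ey; apply: weak_lim_unique (@essential_projP y) _.
by apply: cvg_weak_lim; apply: approx_unit_essential.
Qed.

Theorem essential_space_complemented : complemented (essential_space phi).
Proof.
exists essential_proj; split.
- exact: essential_proj_linear.
- exists (Kphi * Ke)%:C => x; rewrite !rnormE -rmorphM lecR.
  exact: essential_proj_le.
- by move=> x; apply/essential_proj_id/essential_proj_range.
- apply/seteqP; split=> [_ [x _ <-]|y Ey]; first exact: essential_proj_range.
  by exists y => //; apply: essential_proj_id.
Qed.
End EssentialProjection.

Theorem theoremB (R : realType) (A : completeNormedModType R[i]) (mul : A -> A -> A)
  (X : completeNormedModType R[i]) (phi : A -> X -> X) :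
  banach_algebra_mul mul ->
  has_blai mul ->
  representation mul phi ->
  (forall x : X, weakly_compact_op (fun a : A => phi a x)) ->
  complemented (essential_space phi).
Proof.
move=> _ [I [le [e [M [I0 [_ [le_trans [le_dir [e_le e_approx]]]]]]]]] phi_rep orbit_wc.
have [Kphi Kphi_ge0 phi_le] := representation_rnorm_le phi_rep.
have [Ke Ke_gt0 e_le'] := norm_bounded_rnorm e_le.
have [U [U_ultra U_tails]] := directed_ultrafilter I0 le_trans le_dir.
exact: (essential_space_complemented phi_rep orbit_wc U_tails e_approx
  Kphi_ge0 Ke_gt0 phi_le e_le').
Qed.
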